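(* Let $(\mathcal D,T)$ be a finite basic quasi-schemoid, $(\mathcal C,S)$ a finite quasi-schemoid whose underlying category is a groupoid, and $\phi:(\mathcal C,S)\to(\mathcal D,T)$ an admissible morphism. Then the $\mathbb K$-linear map $\mathbb K(\phi):\mathbb K(\mathcal C,S)\to\mathbb K(\mathcal D,T)$ defined by $\mathbb K(\phi)(s_\pi)=n^\phi_\pi\, s_{\phi(\pi)}$ for $\pi\in S$ is an algebra homomorphism.
   Context: Write $s(f),t(f)$ for source and target. A quasi-schemoid is a pair $(\mathcal C,S)$ with $\mathcal C$ a small category and $S$ a partition of $mor(\mathcal C)$ into nonempty blocks such that for all $\sigma,\tau,\mu\in S$ and $f,g\in\mu$ the sets $\{(a,b)\in\sigma\times\tau: s(a)=t(b), a\circ b=f\}$ and the analogous set for $g$ have equal cardinality, denoted $p^\mu_{\sigma\tau}$. It is finite if $mor(\mathcal C)$ is finite; unital if every block meeting $\{1_x\}$ is contained in it; basic if unital and $\mathcal C$ is a groupoid. $\mathbb K$ is a commutative ring with unit. The category algebra $\mathbb K\mathcal C$ is the free $\mathbb K$-module on $mor(\mathcal C)$ with product $a\cdot b=a\circ b$ if $s(a)=t(b)$ and $0$ otherwise; $s_\sigma=\sum_{f\in\sigma}f$, and the schemoid algebra $\mathbb K(\mathcal C,S)$ is the subalgebra of $\mathbb K\mathcal C$ spanned (freely) by the $s_\sigma$, $\sigma\in S$. A morphism of quasi-schemoids $\phi$ is a functor such that each $\phi(\sigma)$ lies in a unique block of the target, also denoted $\phi(\sigma)$; it is admissible if for every $x\in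 ob(\mathcal C)$, $\sigma\in S$ and $g\in\phi(\sigma)$ with $t(g)=\phi(x)$ there exists $f\in\sigma$ with $t(f)=x$ and $\phi(f)=g$. Under the hypotheses, for each $\sigma\in S$ there is a positive integer $n^\phi_\sigma$ with $\#(\phi^{-1}(g)\cap\{f\in\sigma:t(f)=x\})=n^\phi_\sigma$ for all $x$ and all $g\in\phi(\sigma)$ with $t(g)=\phi(x)$. *)

From HB Require Import structures.
From mathcomp Require Import all_boot all_order all_algebra.
Set Implicit Arguments. Unset Strict Implicit. Unset Printing Implicit Defensive.
Import GRing.Theory.
Local Open Scope ring_scope.

(* A finite category, given by its data; the axioms are in [is_category].
   [comp a b] is "a o b" and is only meaningful when [src a = tgt b]. *)
Record qcat := QCat {
  ob : finType;
  mor : finType;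
  src : mor -> ob;
  tgt : mor -> ob;
  idm : ob -> mor;
  comp : mor -> mor -> mor }.

Definition is_category (C : qcat) : Prop :=
  [/\ (forall x : ob C, src (idm x) = x /\ tgt (idm x) = x),
      (forall a b : mor C, src a = tgt b -> src (comp a b) = src b /\ tgt (comp a b) = tgt a),
      (forall a : mor C, comp a (idm (src a)) = a /\ comp (idm (tgt a)) a = a)
    & (forall a b c : mor C, src a = tgt b -> src b = tgt c ->
         comp a (comp b c) = comp (comp a b) c)].

Definition groupoid (C : qcat) : Prop :=
  forall a : mor C, exists b : mor C,
    [/\ src b = tgt a, tgt b = src a,
        comp a b = idm (tgt a) & comp b a = idm (src a)].

Definition nstruct (C : qcat) (sigma tau : {set mor C}) (f : mor C) : nat :=
  #|[set p : mor C * mor C | [&& p.1 \in sigma, p.2 \in tau,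
                                 src p.1 == tgt p.2 & comp p.1 p.2 == f]]|.

(* S is a partition of mor(C) into nonempty blocks (finset's [partition]
   includes [set0 \notin S]) satisfying the structure-constant condition. *)
Definition quasi_schemoid (C : qcat) (S : {set {set mor C}}) : Prop :=
  partition S [set: mor C] /\
  forall sigma tau mu, sigma \in S -> tau \in S -> mu \in S ->
    forall f g, f \in mu -> g \in mu -> nstruct sigma tau f = nstruct sigma tau g.

Definition unital (C : qcat) (S : {set {set mor C}}) : Prop :=
  forall sigma, sigma \in S -> (exists x, idm x \in sigma) ->
    sigma \subset [set idm x | x : ob C].

Definition basic (C : qcat) (S : {set {set mor C}}) : Prop :=
  unital S /\ groupoid C.

Record functor (C D : qcat) := Functor {
  fob : ob C -> ob D;
  fmor : mor C -> mor D }.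

Definition is_functor (C D : qcat) (phi : functor C D) : Prop :=
  [/\ (forall a, src (fmor phi a) = fob phi (src a)),
      (forall a, tgt (fmor phi a) = fob phi (tgt a)),
      (forall x, fmor phi (idm x) = idm (fob phi x))
    & (forall a b, src a = tgt b -> fmor phi (comp a b) = comp (fmor phi a) (fmor phi b))].

Definition qs_morphism (C D : qcat) (phi : functor C D)
    (S : {set {set mor C}}) (T : {set {set mor D}}) : Prop :=
  is_functor phi /\
  forall sigma, sigma \in S -> exists2 tau, tau \in T & fmor phi @: sigma \subset tau.

Definition blk_img (C D : qcat) (phi : functor C D) (T : {set {set mor D}})
    (sigma : {set mor C}) : {set mor D} :=
  match [pick f in sigma] with
  | Some f => pblock T (fmor phi f)
  | None => set0
  end.

Definition admissible (C D : qcat) (phi : functor C D)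
    (S : {set {set mor C}}) (T : {set {set mor D}}) : Prop :=
  forall (x : ob C) sigma, sigma \in S ->
    forall g, g \in blk_img phi T sigma -> tgt g = fob phi x ->
      exists f, [/\ f \in sigma, tgt f = x & fmor phi f = g].

(* n^phi_sigma, computed at x = t(f0), g = phi(f0) for a representative f0 of
   sigma; by the standing fact it does not depend on these choices. *)
Definition nphi (C D : qcat) (phi : functor C D) (sigma : {set mor C}) : nat :=
  match [pick f in sigma] with
  | Some f0 => #|[set f in sigma | (tgt f == tgt f0) && (fmor phi f == fmor phi f0)]|
  | None => 0
  end.

(* Category algebra K C: functions mor C -> K (free module on mor C). *)
Definition catalg (K : comPzRingType) (C : qcat) := {ffun mor C -> K}.

Definition catmul (K : comPzRingType) (C : qcat) (u v : catalg K C) : catalg K C :=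
  [ffun h => \sum_(p : mor C * mor C | (src p.1 == tgt p.2) && (comp p.1 p.2 == h))
               u p.1 * v p.2].

Definition sblk (K : comPzRingType) (C : qcat) (sigma : {set mor C}) : catalg K C :=
  [ffun f => (f \in sigma)%:R].

Definition in_schemoid_alg (K : comPzRingType) (C : qcat) (S : {set {set mor C}})
    (u : catalg K C) : Prop :=
  exists c : {set mor C} -> K,
    u = [ffun f => \sum_(sigma in S) c sigma * sblk K sigma f].

(* K(phi): linear map with s_pi |-> n^phi_pi s_{phi(pi)}; the coefficient of
   s_sigma in u is read off as u at a representative of sigma. *)
Definition Kphi (K : comPzRingType) (C D : qcat) (phi : functor C D)
    (S : {set {set mor C}}) (T : {set {set mor D}}) (u : catalg K C) : catalg K D :=
  [ffun h => \sum_(sigma in S)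
      match [pick f in sigma] with
      | Some f0 => u f0 * (nphi phi sigma)%:R * sblk K (blk_img phi T sigma) h
      | None => 0
      end].

From Pilot Require Import Defs.
From HB Require Import structures.
From mathcomp Require Import all_boot all_order all_algebra.
Set Implicit Arguments. Unset Strict Implicit. Unset Printing Implicit Defensive.
Import GRing.Theory.
Local Open Scope ring_scope.
(* The composition of the category data, not ssrfun's function composition. *)
Local Notation comp := Defs.comp.

(* Elements of K(C,S) are exactly the functions constant on the blocks of S,
   and products of such functions stay blockwise constant (structure counts).
   The heart of the proof is the counting fact that, over an object x of C,
   every fibre of phi inside a block sigma has n^phi_sigma elements: it is in
   bijection with the factorizations through sigma x ker(phi), and ker(phi)
   is a union of blocks because T is unital.  Hence, at a morphism h of D
   ending at phi(x), K(phi)(w)(h) is the plain pushforward sum of w over the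
   morphisms into x mapped to h, and both K(phi)(u v)(h) and
   (K(phi) u)(K(phi) v)(h) reduce to the same sum over composable pairs.
   Since both sides are blockwise constant on T, this settles every h whose
   block meets a morphism ending in phi(ob C); for the remaining h, a
   factorization argument in the groupoid D shows that both sides vanish. *)

Section Partition.
Variables (T : finType) (P : {set {set T}}).
Hypothesis partP : partition P [set: T].

Lemma pblock_in (x : T) : pblock P x \in P.
Proof. by apply: pblock_mem; case/and3P: partP => /eqP ->; rewrite inE. Qed.

Lemma mem_pblock_self (x : T) : x \in pblock P x.
Proof. by rewrite mem_pblock; case/and3P: partP => /eqP ->; rewrite inE. Qed.

Lemma pblockE B x : B \in P -> x \in B -> pblock P x = B.
Proof. by apply: def_pblock; case/and3P: partP. Qed.

Lemma block_nonempty B : B \in P -> exists x, x \in B.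
Proof.
move=> BP; apply/set0Pn; apply: contraTneq BP => ->.
by case/and3P: partP.
Qed.

Lemma same_block_mem B B' x y : B \in P -> B' \in P -> x \in B' -> y \in B' ->
  (x \in B) = (y \in B).
Proof.
move=> BP B'P xB' yB'; apply/idP/idP => inB.
  by rewrite -(pblockE BP inB) (pblockE B'P xB').
by rewrite -(pblockE BP inB) (pblockE B'P yB').
Qed.

End Partition.

Definition blockwise (T : finType) (R : Type) (P : {set {set T}}) (w : T -> R) :=
  forall B, B \in P -> forall x y, x \in B -> y \in B -> w x = w y.

Lemma nstructE (X : qcat) (sigma tau : {set mor X}) f : nstruct sigma tau f =
  (\sum_(p : mor X * mor X)
     [&& p.1 \in sigma, p.2 \in tau, src p.1 == tgt p.2 & comp p.1 p.2 == f])%N.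
Proof.
rewrite /nstruct -sum1_card big_mkcond; apply: eq_bigr => p _; rewrite inE.
by case: ifP.
Qed.

Section SchemoidAlgebra.
Variables (K : comPzRingType) (X : qcat) (P : {set {set mor X}}).
Hypothesis partP : partition P [set: mor X].

Lemma schemoid_algP (w : catalg K X) : in_schemoid_alg P w <-> blockwise P w.
Proof.
split=> [[c ->] B BP x y xB yB | bw].
  rewrite !ffunE; apply: eq_bigr => sigma sigmaP.
  by rewrite !ffunE (same_block_mem partP sigmaP BP xB yB).
exists (fun B : {set mor X} => if [pick f in B] is Some f then w f else 0).
apply/ffunP => f; rewrite ffunE (bigD1 (pblock P f)) ?pblock_in //= big1.
  rewrite ffunE mem_pblock_self // addr0 mulr1.
  case: pickP => [g gB|/(_ f)]; last by rewrite mem_pblock_self.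
  by apply: (bw _ (pblock_in partP f)) => //; rewrite mem_pblock_self.
move=> sigma /andP[sigmaP ne]; rewrite ffunE.
case fsigma: (f \in sigma); last by rewrite mulr0.
by move: ne; rewrite (pblockE partP sigmaP fsigma) eqxx.
Qed.

Lemma catmul_expansion (c d : {set mor X} -> K) h :
  catmul [ffun f => \sum_(s in P) c s * sblk K s f]
         [ffun f => \sum_(s in P) d s * sblk K s f] h =
  \sum_(s in P) \sum_(t in P) c s * d t * (nstruct s t h)%:R.
Proof.
rewrite ffunE.
under eq_bigr do rewrite !ffunE mulr_suml.
under eq_bigr do under eq_bigr do rewrite mulr_sumr.
rewrite exchange_big /=; apply: eq_bigr => s _.
rewrite exchange_big /=; apply: eq_bigr => t _.
rewrite nstructE natr_sum mulr_sumr [RHS]big_mkcond [LHS]big_mkcond.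
apply: eq_bigr => p _; rewrite !ffunE.
case: (p.1 \in s); case: (p.2 \in t); case: (_ && _) => /=;
  by rewrite ?mulr0 ?mul0r ?mulr1.
Qed.

Lemma schemoid_alg_mul (u v : catalg K X) : quasi_schemoid P ->
  in_schemoid_alg P u -> in_schemoid_alg P v -> blockwise P (catmul u v).
Proof.
case=> _ qsP [c ->] [d ->] B BP x y xB yB; rewrite !catmul_expansion.
apply: eq_bigr => s sP; apply: eq_bigr => t tP.
by rewrite (qsP s t B sP tP BP x y xB yB).
Qed.

End SchemoidAlgebra.

Section StructureCounts.
Variables (X : qcat) (P : {set {set mor X}}).
Hypothesis qsP : quasi_schemoid P.

Let partP : partition P [set: mor X] := qsP.1.

Lemma factor_in_blocks sigma tau a b g : sigma \in P -> tau \in P ->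
  a \in sigma -> b \in tau -> src a = tgt b -> g \in pblock P (comp a b) ->
  exists a' b', [/\ a' \in sigma, b' \in tau, src a' = tgt b' & comp a' b' = g].
Proof.
move=> sigmaP tauP asigma btau ab gblk.
have pos : (0 < nstruct sigma tau (comp a b))%N.
  rewrite /nstruct card_gt0; apply/set0Pn; exists (a, b).
  by rewrite inE /= asigma btau ab !eqxx.
rewrite (qsP.2 _ _ _ sigmaP tauP (pblock_in partP _) _ _ (mem_pblock_self partP _) gblk) in pos.
case/card_gt0P: pos => -[a' b']; rewrite inE /= => /and4P[a'sigma b'tau /eqP ? /eqP ?].
by exists a', b'.
Qed.

Definition saturated (E : {set mor X}) :=
  forall rho, rho \in P -> forall a b, a \in rho -> b \in rho -> (a \in E) = (b \in E).

Lemma saturated_indicator E x : saturated E ->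
  nat_of_bool (x \in E) = (\sum_(rho in P | rho \subset E) nat_of_bool (x \in rho))%N.
Proof.
move=> satE; case xE: (x \in E).
  rewrite (bigD1 (pblock P x)) /=; last first.
    rewrite (pblock_in partP); apply/subsetP => y yblk.
    by rewrite (satE _ (pblock_in partP x) y x yblk (mem_pblock_self partP x)).
  rewrite (mem_pblock_self partP) big1 // => rho /andP[/andP[rhoP _] ne].
  case xrho: (x \in rho) => //; by move: ne; rewrite (pblockE partP rhoP xrho) eqxx.
rewrite big1 // => rho /andP[rhoP /subsetP sub]; case xrho: (x \in rho) => //.
by rewrite (sub _ xrho) in xE.
Qed.

Lemma nstruct_saturated sigma E mu f g : saturated E ->
  sigma \in P -> mu \in P -> f \in mu -> g \in mu ->
  nstruct sigma E f = nstruct sigma E g.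
Proof.
move=> satE sigmaP muP fmu gmu.
have split_E h : nstruct sigma E h = (\sum_(rho in P | rho \subset E) nstruct sigma rho h)%N.
  rewrite nstructE; under [RHS]eq_bigr do rewrite nstructE.
  rewrite exchange_big /=; apply: eq_bigr => p _.
  case: (p.1 \in sigma); case: (src _ == _); case: (comp _ _ == _);
    rewrite /= ?andbT ?andbF ?big1_eq //;
    try by rewrite big1 // => i _; rewrite andbF.
  by rewrite (saturated_indicator _ satE); apply: eq_bigr => i _; rewrite andbT.
rewrite !split_E; apply: eq_bigr => rho /andP[rhoP _].
exact: (qsP.2 sigma rho mu sigmaP rhoP muP f g fmu gmu).
Qed.

End StructureCounts.

Section CategoryLaws.
Variable X : qcat.
Hypothesis catX : is_category X.

Lemma src_id (x : ob X) : src (idm x) = x.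
Proof. by case: catX => H _ _ _; case: (H x). Qed.
Lemma tgt_id (x : ob X) : tgt (idm x) = x.
Proof. by case: catX => H _ _ _; case: (H x). Qed.
Lemma tgt_comp (a b : mor X) : src a = tgt b -> tgt (comp a b) = tgt a.
Proof. by case: catX => _ H _ _ ab; case: (H a b ab). Qed.
Lemma comp_a1 (a : mor X) : comp a (idm (src a)) = a.
Proof. by case: catX => _ _ H _; case: (H a). Qed.
Lemma comp_1a (a : mor X) : comp (idm (tgt a)) a = a.
Proof. by case: catX => _ _ H _; case: (H a). Qed.
Lemma compA (a b c : mor X) : src a = tgt b -> src b = tgt c ->
  comp a (comp b c) = comp (comp a b) c.
Proof. by case: catX => _ _ _ H; apply: H. Qed.

(* In a groupoid quasi-schemoid, if the block of the identity at t(h)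
   contains the identity at y, then the block of h contains a morphism
   with target y: factor 1_{t(h)} = h o h^-1 through the blocks of h, h^-1. *)
Lemma block_reaches_object (P : {set {set mor X}}) h y :
  groupoid X -> quasi_schemoid P ->
  idm y \in pblock P (idm (tgt h)) -> exists2 h', h' \in pblock P h & tgt h' = y.
Proof.
move=> grpX qsP yblk; have partP := qsP.1.
case: (grpX h) => hinv [shinv thinv hhinv _].
rewrite -hhinv in yblk.
have [a' [b' [a'h _ sa'b' a'b'y]]] := factor_in_blocks qsP (pblock_in partP h)
  (pblock_in partP hinv) (mem_pblock_self partP h) (mem_pblock_self partP hinv)
  (esym thinv) yblk.
by exists a' => //; rewrite -(tgt_comp sa'b') a'b'y tgt_id.
Qed.

End CategoryLaws.

Section AdmissibleMorphism.
Variables (K : comPzRingType) (C D : qcat)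
  (S : {set {set mor C}}) (T : {set {set mor D}}) (phi : functor C D).
Hypotheses (catC : is_category C) (catD : is_category D)
  (qsS : quasi_schemoid S) (qsT : quasi_schemoid T)
  (basicT : basic T) (grpC : groupoid C)
  (morph : qs_morphism phi S T) (adm : admissible phi S T).
Local Notation F := (fmor phi).
Local Notation Fo := (fob phi).

Let partS : partition S [set: mor C] := qsS.1.
Let partT : partition T [set: mor D] := qsT.1.

Lemma fmor_src a : src (F a) = Fo (src a). Proof. by case: morph => [[]]. Qed.
Lemma fmor_tgt a : tgt (F a) = Fo (tgt a). Proof. by case: morph => [[]]. Qed.
Lemma fmor_id x : F (idm x) = idm (Fo x). Proof. by case: morph => [[]]. Qed.
Lemma fmor_comp a b : src a = tgt b -> F (comp a b) = comp (F a) (F b).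
Proof. by case: morph => [[_ _ _ H]] _; apply: H. Qed.

Lemma blk_imgE sigma f : sigma \in S -> f \in sigma -> blk_img phi T sigma = pblock T (F f).
Proof.
move=> sigmaS fsigma; rewrite /blk_img.
case: pickP => [f0 f0sigma|/(_ f)]; last by rewrite fsigma.
case: morph => _ /(_ sigma sigmaS) [tau tauT sub].
rewrite (pblockE partT tauT (subsetP sub _ (imset_f _ f0sigma))).
by rewrite (pblockE partT tauT (subsetP sub _ (imset_f _ fsigma))).
Qed.

Lemma blk_img_in sigma : sigma \in S -> blk_img phi T sigma \in T.
Proof.
move=> sigmaS; have [f fsigma] := block_nonempty partS sigmaS.
by rewrite (blk_imgE sigmaS fsigma) pblock_in.
Qed.

Lemma fmor_in_blk_img sigma f : sigma \in S -> f \in sigma -> F f \in blk_img phi T sigma.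
Proof. by move=> sigmaS fsigma; rewrite (blk_imgE sigmaS fsigma) mem_pblock_self. Qed.

Definition kernel : {set mor C} := [set k | F k == idm (src (F k))].

(* Since T is unital, a block of T containing one identity contains only
   identities; hence the kernel of phi is a union of blocks of S. *)
Lemma kernel_saturated : saturated S kernel.
Proof.
suff sub rho a b : rho \in S -> a \in rho -> b \in rho -> a \in kernel -> b \in kernel.
  by move=> rho rhoS a b arho brho; apply/idP/idP; apply: sub rhoS _ _.
move=> rhoS arho brho; rewrite !inE => /eqP Fa_id.
have idm_in : exists z, idm z \in blk_img phi T rho.
  by exists (src (F a)); rewrite -Fa_id fmor_in_blk_img.
have /subsetP := basicT.1 _ (blk_img_in rhoS) idm_in.
by move=> /(_ _ (fmor_in_blk_img rhoS brho)) /imsetP[z _ ->]; rewrite src_id.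
Qed.

Definition fibre (sigma : {set mor C}) x h : {set mor C} :=
  [set f in sigma | (tgt f == x) && (F f == h)].

(* Since C is a groupoid, f |-> (f, f^-1 o f1) identifies the fibre through
   f1 with the factorizations of f1 through sigma x kernel. *)
Lemma fibre_nstruct sigma f1 : #|fibre sigma (tgt f1) (F f1)| = nstruct sigma kernel f1.
Proof.
rewrite /nstruct; set A := [set p : mor C * mor C | _].
rewrite -(@card_in_imset _ _ fst A); last first.
  move=> [p1 p2] [q1 q2]; rewrite !inE /= => /and4P[_ _ /eqP sp /eqP cp].
  move=> /and4P[_ _ /eqP sq /eqP cq] eq1; subst q1.
  have [p1inv [sinv _ _ invp1]] := grpC p1.
  have cancel r : src p1 = tgt r -> r = comp p1inv (comp p1 r).
    by move=> spr; rewrite (compA catC) ?sinv // invp1 spr comp_1a.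
  by rewrite (cancel p2 sp) (cancel q2 sq) cp cq.
apply: eq_card => c; rewrite inE; apply/andP/imsetP.
  case=> csigma /andP[/eqP tc /eqP Fc].
  have [cinv [scinv tcinv ccinv cinvc]] := grpC c.
  have scinv_f1 : src cinv = tgt f1 by rewrite scinv tc.
  exists (c, comp cinv f1) => //.
  rewrite inE /= csigma (tgt_comp catC) // tcinv eqxx /=.
  rewrite (compA catC) ?tcinv // ccinv tc comp_1a // eqxx andbT inE.
  have -> : F (comp cinv f1) = idm (Fo (src c)).
    by rewrite fmor_comp // -Fc -fmor_comp ?tcinv // cinvc fmor_id.
  by rewrite src_id.
case=> [[p1 p2]]; rewrite inE /= => /and4P[p1sigma /[1!inE] /eqP Fp2 /eqP sp /eqP cp] ->.
rewrite /= p1sigma -cp (tgt_comp catC) // eqxx /= fmor_comp // Fp2.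
have -> : src (F p2) = src (F p1).
  by rewrite (fmor_src p1) sp -fmor_tgt Fp2 (tgt_id catD) (src_id catD).
by rewrite (comp_a1 catD).
Qed.

Lemma card_fibre sigma x h : sigma \in S -> tgt h = Fo x ->
  #|fibre sigma x h| = if h \in blk_img phi T sigma then nphi phi sigma else 0%N.
Proof.
move=> sigmaS th; case: ifP => hblk.
  have [f1 [f1sigma <- <-]] := adm sigmaS hblk th.
  rewrite fibre_nstruct /nphi; case: pickP => [f0 f0sigma|/(_ f1)]; last by rewrite f1sigma.
  rewrite (nstruct_saturated qsS kernel_saturated sigmaS sigmaS f1sigma f0sigma).
  exact: esym (fibre_nstruct sigma f0).
apply/eqP; rewrite cards_eq0; apply/eqP/setP => f; rewrite !inE.
apply/negbTE/negP => /andP[fsigma /andP[_ /eqP Ff]].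
by rewrite -Ff fmor_in_blk_img in hblk.
Qed.

Lemma Kphi_blockwise (w : catalg K C) : blockwise T (Kphi phi S T w).
Proof.
move=> B BT a b aB bB; rewrite !ffunE; apply: eq_bigr => sigma sigmaS.
case: pickP => // f0 _.
by rewrite !ffunE (same_block_mem partT (blk_img_in sigmaS) BT aB bB).
Qed.

Lemma Kphi_fibre_sum (w : catalg K C) x h : blockwise S w -> tgt h = Fo x ->
  Kphi phi S T w h = \sum_(f | (tgt f == x) && (F f == h)) w f.
Proof.
move=> bw th; rewrite ffunE.
rewrite (eq_bigl (fun f => (f \in [set: mor C]) && ((tgt f == x) && (F f == h))));
  last by move=> f; rewrite in_setT.
rewrite (set_partition_big_cond _ partS) /=; apply: eq_bigr => sigma sigmaS.
case: pickP => [f0 f0sigma|/= nosigma]; last first.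
  by rewrite big1 // => f /andP[fsigma _]; move: (nosigma f); rewrite fsigma.
rewrite (eq_bigr (fun _ => w f0)) => [|f /andP[fsigma _]]; last first.
  exact: (bw sigma sigmaS f f0 fsigma f0sigma).
rewrite sumr_const -cardsE -/(fibre sigma x h) card_fibre // ffunE /nphi.
by case: ifP => _; rewrite ?mulr1 ?mulr0 ?mulr0n // mulr_natr.
Qed.

Definition pair_sum (u v : catalg K C) x h : K :=
  \sum_(p : mor C * mor C | [&& src p.1 == tgt p.2, tgt p.1 == x & comp (F p.1) (F p.2) == h])
    u p.1 * v p.2.

Lemma Kphi_catmul_pair_sum (u v : catalg K C) x h :
  blockwise S (catmul u v) -> tgt h = Fo x -> Kphi phi S T (catmul u v) h = pair_sum u v x h.
Proof.
move=> buv th; rewrite (Kphi_fibre_sum buv th).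
rewrite /pair_sum (partition_big (fun p : mor C * mor C => comp p.1 p.2)
   (fun k => (tgt k == x) && (F k == h))) /=; last first.
  move=> [p1 p2] /and3P[/eqP sp /eqP tp /eqP cp] /=.
  by rewrite (tgt_comp catC sp) tp fmor_comp // cp !eqxx.
apply: eq_bigr => k /andP[/eqP tk /eqP Fk]; rewrite ffunE; apply: eq_bigl => -[p1 p2] /=.
apply/idP/idP.
  case/andP=> /eqP sp /eqP cp.
  by rewrite -(tgt_comp catC sp) -fmor_comp // cp tk Fk sp !eqxx.
by case/andP=> /and3P[-> _ _ ->].
Qed.

(* The product of images is the same pair sum: split each composable pair
   of D into its fibres and regroup them as composable pairs of C. *)
Lemma catmul_Kphi_pair_sum (u v : catalg K C) x h :
  blockwise S u -> blockwise S v -> tgt h = Fo x ->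
  catmul (Kphi phi S T u) (Kphi phi S T v) h = pair_sum u v x h.
Proof.
move=> bu bv th.
rewrite ffunE /pair_sum (partition_big (fun p : mor C * mor C => (F p.1, F p.2))
   (fun q : mor D * mor D => (src q.1 == tgt q.2) && (comp q.1 q.2 == h))) /=; last first.
  by move=> [p1 p2] /and3P[/eqP sp _ /eqP cp] /=; rewrite fmor_src fmor_tgt sp cp !eqxx.
apply: eq_bigr => -[q1 q2] /andP[/eqP sq /eqP cq] /=.
have tq1 : tgt q1 = Fo x by rewrite -th -cq (tgt_comp catD sq).
rewrite (Kphi_fibre_sum bu tq1) mulr_suml.
transitivity (\sum_(f | (tgt f == x) && (F f == q1))
   \sum_(g | (tgt g == src f) && (F g == q2)) u f * v g).
  apply: eq_bigr => f /andP[_ /eqP Ff].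
  rewrite (Kphi_fibre_sum (x := src f) bv); first by rewrite mulr_sumr.
  by rewrite -sq -Ff fmor_src.
rewrite pair_big_dep; apply: eq_bigl => -[p1 p2] /=.
rewrite xpair_eqE; apply/idP/idP.
  case/and3P=> /andP[tx /eqP F1] /eqP t2 /eqP F2.
  by rewrite F1 F2 t2 cq tx !eqxx.
by case/and3P => /and3P[/eqP sp -> _] /eqP F1 /eqP F2; rewrite F1 F2 sp !eqxx.
Qed.

(* If a lies in some phi(sigma), the block of 1_{t(a)} contains an identity
   at an object in the image of phi: factor phi(f0) = 1 o b through
   (block of 1_{t(a)}) x phi(sigma) and use that T is unital. *)
Lemma identity_block_meets_image sigma a : sigma \in S -> a \in blk_img phi T sigma ->
  exists y, idm (Fo y) \in pblock T (idm (tgt a)).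
Proof.
move=> sigmaS ablk.
have [f0 f0sigma] := block_nonempty partS sigmaS.
have f0blk : F f0 \in pblock T (comp (idm (tgt a)) a).
  by rewrite (comp_1a catD) (pblockE partT (blk_img_in sigmaS) ablk) fmor_in_blk_img.
have [e [b [eblk _ seb ebf0]]] := factor_in_blocks qsT (pblock_in partT _)
  (blk_img_in sigmaS) (mem_pblock_self partT _) ablk (src_id catD _) f0blk.
have idm_in : exists z, idm z \in pblock T (idm (tgt a)).
  by exists (tgt a); rewrite mem_pblock_self.
have /subsetP /(_ e eblk) /imsetP[z _ ez] := basicT.1 _ (pblock_in partT _) idm_in.
rewrite ez (src_id catD) in seb; rewrite ez seb (comp_1a catD) in ebf0.
by exists (tgt f0); rewrite -fmor_tgt -ebf0 -seb -ez.
Qed.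

Definition over_image (h : mor D) : bool :=
  [exists h' in pblock T h, [exists y, tgt h' == Fo y]].

(* Any morphism sharing its target with an element of some phi(sigma) lies
   over the image (using the inverse of h in the groupoid D). *)
Lemma over_image_tgt sigma a h : sigma \in S -> a \in blk_img phi T sigma ->
  tgt a = tgt h -> over_image h.
Proof.
move=> sigmaS ablk tah.
have [y] := identity_block_meets_image sigmaS ablk; rewrite tah => yblk.
have [h' h'blk th'] := block_reaches_object catD basicT.2 qsT yblk.
by apply/exists_inP; exists h' => //; apply/existsP; exists y; rewrite th'.
Qed.

Lemma Kphi_eq0 (w : catalg K C) a :
  (forall sigma, sigma \in S -> a \notin blk_img phi T sigma) -> Kphi phi S T w a = 0.
Proof.
move=> out; rewrite ffunE big1 // => sigma sigmaS.
by case: pickP => // f0 _; rewrite ffunE (negbTE (out _ sigmaS)) mulr0.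
Qed.

(* If h lies over the image,
   move to an h' of its block ending at some phi(x) (both sides lie in
   K(D,T)) and compare pair sums; otherwise both sides vanish. *)
Lemma Kphi_mul_at (u v : catalg K C) h :
  in_schemoid_alg S u -> in_schemoid_alg S v ->
  Kphi phi S T (catmul u v) h = catmul (Kphi phi S T u) (Kphi phi S T v) h.
Proof.
move=> uS vS; have bu := (schemoid_algP partS u).1 uS.
have bv := (schemoid_algP partS v).1 vS.
have buv := schemoid_alg_mul qsS uS vS.
have bR : blockwise T (catmul (Kphi phi S T u) (Kphi phi S T v)).
  by apply: schemoid_alg_mul qsT _ _; apply/schemoid_algP => //; apply: Kphi_blockwise.
have [/exists_inP[h' h'blk /existsP[x /eqP th']] | not_over] := boolP (over_image h).
  rewrite (Kphi_blockwise _ (pblock_in partT h) (mem_pblock_self partT h) h'blk).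
  rewrite (bR _ (pblock_in partT h) _ _ (mem_pblock_self partT h) h'blk).
  by rewrite (Kphi_catmul_pair_sum buv th') (catmul_Kphi_pair_sum bu bv th').
have outside a : tgt a = tgt h -> forall sigma, sigma \in S -> a \notin blk_img phi T sigma.
  move=> tah sigma sigmaS; apply/negP => ablk.
  by rewrite (over_image_tgt sigmaS ablk tah) in not_over.
rewrite Kphi_eq0; last exact: outside.
rewrite ffunE big1 // => -[a b] /andP[/eqP sab /eqP cab] /=.
by rewrite Kphi_eq0 ?mul0r //; apply: outside; rewrite -cab (tgt_comp catD sab).
Qed.

End AdmissibleMorphism.

Theorem proposition6p7 (K : comPzRingType) (C D : qcat)
    (S : {set {set mor C}}) (T : {set {set mor D}}) (phi : functor C D) :
  is_category C -> is_category D ->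
  quasi_schemoid S -> quasi_schemoid T ->
  basic T -> groupoid C ->
  qs_morphism phi S T -> admissible phi S T ->
  forall u v : catalg K C, in_schemoid_alg S u -> in_schemoid_alg S v ->
    Kphi phi S T (catmul u v) = catmul (Kphi phi S T u) (Kphi phi S T v).
Proof.
move=> catC catD qsS qsT basicT grpC morph adm u v uS vS.
by apply/ffunP => h; apply: Kphi_mul_at.
Qed.
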